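(* Let $d\ge1$. Let $G_A=(V_A,E_A)$ with configuration $\mathbf{p}^A$ and $G_B=(V_B,E_B)$ with configuration $\mathbf{p}^B$ be frameworks in general position in $\mathbb{R}^d$, with $V_C=V_A\cap V_B$ a proper subset of both $V_A$ and $V_B$, $n=|V_C|\ge d+1$, and $\mathbf{p}^A_i=\mathbf{p}^B_i$ for $i\in V_C$. Let $\Omega_A$ (indexed by $V_A$) and $\Omega_B$ (indexed by $V_B$) be positive semidefinite stress matrices of nullity $d+1$ of $G_A(\mathbf{p}^A)$ and $G_B(\mathbf{p}^B)$ respectively. Let $V=V_A\cup V_B$ and let $\widetilde\Omega_A$, $\widetilde\Omega_B$ be the $V\times V$ matrices obtained by extending $\Omega_A$, $\Omega_B$ by zeros, i.e. $(\widetilde\Omega_A)_{ij}=(\Omega_A)_{ij}$ if $i,j\in V_A$ and $0$ otherwise, and similarly for $B$. Then $\widetilde\Omega=\widetilde\Omega_A+\widetilde\Omega_B$ is a positive semidefinite stress matrix of nullity $d+1$ of the framework attachment, i.e. of the framework with graph $(V,E_A\cup E_B)$ and configuration $\mathbf{p}$ where $\mathbf{p}_i=\mathbf{p}^A_i$ for $i\in V_A$, $\mathbf{p}_i=\mathbf{p}^B_i$ for $i\in V_B$.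
   Context: A framework $G(\mathbf{p})$ in $\mathbb{R}^d$ is a finite graph $G=(V,E)$ with points $\mathbf{p}_i\in\mathbb{R}^d$; it is in general position if any $d+1$ distinct vertices have affinely independent points. A stress matrix of $G(\mathbf{p})$ is a real $|V|\times|V|$ matrix $\Omega$ with: $\Omega_{ij}=\Omega_{ji}$; $\Omega_{ij}=0$ whenever $i\ne j$ and $\{i,j\}\notin E$; $\sum_{j}\Omega_{ij}=0$ for all $i$; $\sum_j\Omega_{ij}\mathbf{p}_j=0$ for all $i$. Its nullity is $\dim\ker\Omega$. *)

From HB Require Import structures.
From mathcomp Require Import all_boot all_order all_algebra.
From mathcomp Require Import reals.
Set Implicit Arguments. Unset Strict Implicit. Unset Printing Implicit Defensive.
Import Order.TTheory GRing.Theory Num.Theory.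
Local Open Scope ring_scope.

Definition vtx (T : finType) (V : {set T}) : finType := {x : T | x \in V}.

(* General position of a configuration p (points in R^d) on the vertex set V:
   any d+1 distinct vertices have affinely independent points, i.e. the lifted
   vectors (p_i, 1) in R^(d+1) are linearly independent. *)
Definition general_position (R : realType) (d : nat) (T : finType)
    (V : {set T}) (p : T -> 'rV[R]_d) : Prop :=
  forall f : 'I_d.+1 -> T, injective f -> (forall k, f k \in V) ->
    row_free (\matrix_(k < d.+1) row_mx (p (f k)) (1 : 'rV[R]_1)).

Definition is_stress (R : realType) (d : nat) (T : finType) (V : {set T})
    (E : {set {set T}}) (p : T -> 'rV[R]_d) (Om : vtx V -> vtx V -> R) : Prop :=
  [/\ forall i j, Om i j = Om j i,
      forall i j, i != j -> [set val i; val j] \notin E -> Om i j = 0,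
      forall i, \sum_j Om i j = 0
    & forall i, \sum_j Om i j *: p (val j) = 0].

Definition psd (R : realType) (I : finType) (Om : I -> I -> R) : Prop :=
  forall x : I -> R, 0 <= \sum_i \sum_j x i * Om i j * x j.

Definition to_mx (R : realType) (I : finType) (Om : I -> I -> R)
  : 'M[R]_#|I| := \matrix_(i, j) Om (enum_val i) (enum_val j).

Definition nullity (R : realType) (I : finType) (Om : I -> I -> R) : nat :=
  \rank (kermx (to_mx Om)^T).

Definition ext0 (R : realType) (T : finType) (V : {set T})
    (Om : vtx V -> vtx V -> R) (i j : T) : R :=
  match @insub T (fun x => x \in V) (vtx V) i,
        @insub T (fun x => x \in V) (vtx V) j with
  | Some a, Some b => Om a b
  | _, _ => 0
  end.

From HB Require Import structures.
From mathcomp Require Import all_boot all_order all_algebra.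
From mathcomp Require Import reals.
From mathcomp Require Import ring lra.
Import Order.TTheory GRing.Theory Num.Theory.
Set Implicit Arguments. Unset Strict Implicit. Unset Printing Implicit Defensive.
Local Open Scope ring_scope.

(* The kernel of a positive semidefinite sum is the intersection of the kernels,
   since x^T (A + B) x = 0 forces x^T A x = x^T B x = 0.  The kernel of a PSD
   stress of nullity d+1 in general position consists exactly of the affine
   functions of the configuration, which always lie in it.  So a kernel vector
   of the attached stress is affine on each part; the two affine maps agree on
   the d+1 affinely independent common points, hence coincide, and the kernel
   of the attachment is again the (d+1)-dimensional space of affine functions. *)

Section QuadraticForm.
Variables (R : realType) (I : finType).
Implicit Types (Om : I -> I -> R) (x y : I -> R).

Definition in_ker Om x := forall i, \sum_j Om i j * x j = 0.

Definition quad Om x y := \sum_i \sum_j x i * Om i j * y j.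

Lemma quadC Om x y : (forall i j, Om i j = Om j i) -> quad Om x y = quad Om y x.
Proof.
move=> OmC; rewrite /quad exchange_big; apply: eq_bigr => i _.
by apply: eq_bigr => j _; rewrite (OmC j i); ring.
Qed.

Lemma quadE Om x y : quad Om x y = \sum_i x i * \sum_j Om i j * y j.
Proof. by apply: eq_bigr => i _; rewrite mulr_sumr; apply: eq_bigr => j _; rewrite mulrA. Qed.

Lemma quad_addm Om1 Om2 x y :
  quad (fun i j => Om1 i j + Om2 i j) x y = quad Om1 x y + quad Om2 x y.
Proof.
rewrite /quad -big_split; apply: eq_bigr => i _.
by rewrite -big_split; apply: eq_bigr => j _ /=; ring.
Qed.

Lemma quad_shift Om x y t :
  quad Om (fun i => x i + t * y i) (fun i => x i + t * y i) =
  quad Om x x + t * (quad Om x y + quad Om y x) + t ^+ 2 * quad Om y y.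
Proof.
rewrite /quad mulrDr !mulr_sumr -!big_split /=; apply: eq_bigr => i _.
by rewrite !mulr_sumr -!big_split /=; apply: eq_bigr => j _; ring.
Qed.

Lemma psd_add Om1 Om2 : psd Om1 -> psd Om2 -> psd (fun i j => Om1 i j + Om2 i j).
Proof.
move=> P1 P2 x; rewrite -[X in _ <= X]/(quad _ x x) quad_addm.
exact: addr_ge0 (P1 x) (P2 x).
Qed.

Lemma quadratic_ge0_lin0 (a c : R) :
  0 <= c -> (forall t, 0 <= t * (a + a) + t ^+ 2 * c) -> a = 0.
Proof.
move=> c0 ge0; have c1 : 0 < c + 1 by lra.
have := ge0 (- a / (c + 1)).
have -> : - a / (c + 1) * (a + a) + (- a / (c + 1)) ^+ 2 * c =
          - (a * a * (c + 2)) / (c + 1) ^+ 2 by field; lra.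
rewrite pmulr_lge0 ?invr_gt0 ?exprn_gt0 // oppr_ge0 => aa_le0.
have : a * a <= 0 by nra.
nra.
Qed.

Lemma ker_quad0 Om x : in_ker Om x -> quad Om x x = 0.
Proof. by move=> xker; rewrite quadE big1 // => i _; rewrite xker mulr0. Qed.

(* Perturbing x along v := Om x shows that quad Om v x = |v|^2 vanishes. *)
Lemma psd_quad0_ker Om x :
  (forall i j, Om i j = Om j i) -> psd Om -> quad Om x x = 0 -> in_ker Om x.
Proof.
move=> OmC Om_psd x0.
pose v i := \sum_j Om i j * x j.
have vxE : quad Om v x = \sum_i v i ^+ 2.
  by rewrite quadE; apply: eq_bigr => i _; rewrite expr2.
have : quad Om v x = 0.
  apply: (quadratic_ge0_lin0 (Om_psd v)) => t.
  have := Om_psd (fun i => x i + t * v i).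
  by rewrite -[X in _ <= X -> _]/(quad _ _ _) quad_shift x0 add0r (quadC _ _ OmC).
rewrite vxE => /eqP; rewrite psumr_eq0 => [/allP v0 i|i _]; last exact: sqr_ge0.
by apply/eqP; rewrite -sqrf_eq0; apply: v0; rewrite mem_index_enum.
Qed.

Lemma in_ker_psd_add Om1 Om2 x :
  (forall i j, Om1 i j = Om1 j i) -> (forall i j, Om2 i j = Om2 j i) ->
  psd Om1 -> psd Om2 -> in_ker (fun i j => Om1 i j + Om2 i j) x ->
  in_ker Om1 x /\ in_ker Om2 x.
Proof.
move=> Om1C Om2C P1 P2 /ker_quad0; rewrite quad_addm => q0.
have q1 : 0 <= quad Om1 x x := P1 x.
have q2 : 0 <= quad Om2 x x := P2 x.
by split; [apply: psd_quad0_ker Om1C P1 _ | apply: psd_quad0_ker Om2C P2 _]; lra.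
Qed.

End QuadraticForm.

Section KernelMatrix.
Variables (R : realType) (I : finType).
Implicit Types (Om : I -> I -> R) (x : I -> R).

Definition row_of x : 'rV[R]_#|I| := \row_l x (enum_val l).
Definition fun_of_row (u : 'rV[R]_#|I|) : I -> R := fun i => u 0 (enum_rank i).

Lemma fun_of_rowK u : row_of (fun_of_row u) = u.
Proof. by apply/rowP => l; rewrite mxE /fun_of_row enum_valK. Qed.

Lemma sum_enum_val (F : I -> R) : \sum_j F j = \sum_(l < #|I|) F (enum_val l).
Proof. by rewrite (reindex (@enum_val I I)) //; exact/onW_bij/(@enum_val_bij I). Qed.

Lemma sub_kermx_in_ker Om x :
  (row_of x <= kermx (to_mx Om)^T)%MS <-> in_ker Om x.
Proof.
have rowE k : (row_of x *m (to_mx Om)^T) 0 k = \sum_j Om (enum_val k) j * x j.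
  by rewrite mxE sum_enum_val; apply: eq_bigr => l _; rewrite !mxE mulrC.
rewrite sub_kermx; split=> [/eqP/rowP x0 i | xker].
  by have := x0 (enum_rank i); rewrite rowE enum_rankK mxE.
by apply/eqP/rowP => k; rewrite rowE mxE xker.
Qed.

Definition linfun_of n (q : I -> 'rV[R]_n) x :=
  exists c : 'cV[R]_n, forall i, x i = (q i *m c) 0 0.

Definition rows_mx n (q : I -> 'rV[R]_n) : 'M[R]_(#|I|, n) := \matrix_l q (enum_val l).

Lemma sub_rows_mx_linfun n (q : I -> 'rV[R]_n) x :
  (row_of x <= (rows_mx q)^T)%MS <-> linfun_of q x.
Proof.
split=> [/submxP [D xD] | [c xc]].
  exists D^T => i; have := congr1 (fun u : 'rV[R]_#|I| => u 0 (enum_rank i)) xD.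
  rewrite !mxE enum_rankK => ->.
  by apply: eq_bigr => k _; rewrite !mxE enum_rankK mulrC.
apply/submxP; exists c^T; apply/rowP => l; rewrite mxE xc !mxE.
by apply: eq_bigr => k _; rewrite !mxE mulrC.
Qed.

Lemma nullity_rows_mx Om n (q : I -> 'rV[R]_n) :
  (forall x, in_ker Om x <-> linfun_of q x) -> nullity Om = \rank (rows_mx q).
Proof.
move=> kerE; rewrite /nullity -[\rank (rows_mx q)]mxrank_tr; apply/eqP.
rewrite eqn_leq; apply/andP; split; apply: mxrankS; apply/row_subP => k.
  rewrite -[row k _]fun_of_rowK; apply/sub_rows_mx_linfun/kerE/sub_kermx_in_ker.
  by rewrite fun_of_rowK row_sub.
rewrite -[row k _]fun_of_rowK; apply/sub_kermx_in_ker/kerE/sub_rows_mx_linfun.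
by rewrite fun_of_rowK row_sub.
Qed.

Lemma in_ker_linfun Om n (q : I -> 'rV[R]_n) :
  (forall x, linfun_of q x -> in_ker Om x) -> nullity Om = \rank (rows_mx q) ->
  forall x, in_ker Om x -> linfun_of q x.
Proof.
move=> lin_ker rk.
have sub_ker : ((rows_mx q)^T <= kermx (to_mx Om)^T)%MS.
  apply/row_subP => k; rewrite -[row k _]fun_of_rowK.
  apply/sub_kermx_in_ker/lin_ker/sub_rows_mx_linfun.
  by rewrite fun_of_rowK row_sub.
have ker_sub : (kermx (to_mx Om)^T <= (rows_mx q)^T)%MS.
  by rewrite -(mxrank_leqif_sup sub_ker).2 mxrank_tr -rk.
move=> x /sub_kermx_in_ker x_ker; apply/sub_rows_mx_linfun.
exact: submx_trans ker_sub.
Qed.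

End KernelMatrix.

Section AffineMaps.
Variables (R : realType) (T : finType).

Definition lift d (v : 'rV[R]_d) : 'rV[R]_(d + 1) := row_mx v 1.

Lemma lift_mulE d (v : 'rV[R]_d) (c : 'cV[R]_(d + 1)) :
  (lift v *m c) 0 0 = (v *m usubmx c) 0 0 + dsubmx c 0 0.
Proof. by rewrite /lift -{1}(vsubmxK c) mul_row_col mul1mx mxE. Qed.

Lemma lift_coef_inj d (P : 'I_d.+1 -> 'rV[R]_d) (c1 c2 : 'cV[R]_(d + 1)) :
  row_free (\matrix_k lift (P k)) ->
  (forall k, (lift (P k) *m c1) 0 0 = (lift (P k) *m c2) 0 0) -> c1 = c2.
Proof.
set Q := \matrix_k lift (P k) => Q_free Pc.
have QcE c k : (Q *m c) k 0 = (lift (P k) *m c) 0 0.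
  by rewrite !mxE; apply: eq_bigr => l _; rewrite mxE.
have QtT_free : row_free Q^T by rewrite /row_free mxrank_tr (eqP Q_free) addn1.
apply: trmx_inj; apply: (row_free_inj QtT_free); rewrite -!trmx_mul; congr _^T.
by apply/colP => k; rewrite !QcE.
Qed.

Lemma stress_in_ker_lift (V : {set T}) d (E : {set {set T}}) (p : T -> 'rV[R]_d)
    (Om : vtx V -> vtx V -> R) :
  is_stress E p Om -> forall x, linfun_of (fun i : vtx V => lift (p (val i))) x -> in_ker Om x.
Proof.
move=> [_ _ row0 rowp0] x [c xc] i.
under eq_bigr do rewrite xc lift_mulE mulrDr.
rewrite big_split /= -mulr_suml row0 mul0r addr0.
transitivity (((\sum_j Om i j *: p (val j)) *m usubmx c) 0 0).
  by rewrite mulmx_suml summxE; apply: eq_bigr => j _; rewrite -scalemxAl [RHS]mxE.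
by rewrite rowp0 mul0mx mxE.
Qed.

Lemma rank_lift_rows (V : {set T}) d (p : T -> 'rV[R]_d) (f : 'I_d.+1 -> T) :
  (forall k, f k \in V) -> row_free (\matrix_k lift (p (f k))) ->
  \rank (rows_mx (fun i : vtx V => lift (p (val i)))) = d.+1.
Proof.
move=> fV f_free.
have sub_rows : (\matrix_k lift (p (f k)) <= rows_mx (fun i : vtx V => lift (p (val i))))%MS.
  apply/row_subP => k; rewrite rowK.
  have -> : lift (p (f k)) = row (enum_rank (exist _ (f k) (fV k) : vtx V))
                                 (rows_mx (fun i : vtx V => lift (p (val i)))).
    by rewrite rowK enum_rankK.
  exact: row_sub.
apply/eqP; rewrite eqn_leq (leq_trans (rank_leq_col _)) ?addn1 //.
by rewrite -{1}(eqP f_free); exact: mxrankS.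
Qed.

End AffineMaps.

Section ZeroExtension.
Variables (R : realType) (T : finType).
Implicit Types (V W : {set T}).

Definition ext0_on W V (Om : vtx V -> vtx V -> R) : vtx W -> vtx W -> R :=
  fun i j => ext0 Om (val i) (val j).
#[global] Arguments ext0_on W {V} Om.

Definition ext0v V (x : vtx V -> R) (t : T) : R :=
  if @insub T (fun y => y \in V) (vtx V) t is Some i then x i else 0.

Definition restr V W (x : vtx W -> R) : vtx V -> R := fun a => ext0v x (val a).
#[global] Arguments restr V {W} x.

Lemma ext0E V (Om : vtx V -> vtx V -> R) a b : ext0 Om (val a) (val b) = Om a b.
Proof. by rewrite /ext0 !valK. Qed.

Lemma ext0vE V (x : vtx V -> R) i : ext0v x (val i) = x i.
Proof. by rewrite /ext0v valK. Qed.

Lemma ext0_outl V (Om : vtx V -> vtx V -> R) t s : t \notin V -> ext0 Om t s = 0.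
Proof.
move=> tV; rewrite /ext0.
by have -> : @insub T (fun y => y \in V) (vtx V) t = None by apply/insubF/negbTE.
Qed.

Lemma ext0_outr V (Om : vtx V -> vtx V -> R) t s : s \notin V -> ext0 Om t s = 0.
Proof.
move=> sV; rewrite /ext0.
have -> : @insub T (fun y => y \in V) (vtx V) s = None by apply/insubF/negbTE.
by case: insub.
Qed.

Lemma ext0C V (Om : vtx V -> vtx V -> R) t s :
  (forall a b, Om a b = Om b a) -> ext0 Om t s = ext0 Om s t.
Proof. by move=> OmC; rewrite /ext0; case: insub => [a|]; case: insub => [b|]. Qed.

Lemma sum_vtx_sub (M : nmodType) V W (G : T -> M) : V \subset W ->
  (forall s, s \notin V -> G s = 0) ->
  \sum_(j : vtx W) G (val j) = \sum_(b : vtx V) G (val b).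
Proof.
move=> VW G0; rewrite -(big_sub W) -(big_sub V) [LHS]big_mkcond [RHS]big_mkcond.
apply: eq_bigr => t _; case tV: (t \in V); first by rewrite (subsetP VW _ tV).
by case: (t \in W); rewrite // G0 ?tV.
Qed.

Lemma rowsum_ext0 (M : nmodType) V W (Om : vtx V -> vtx V -> R) (F : R -> T -> M) t :
  V \subset W -> (forall s, F 0 s = 0) -> (forall a, \sum_b F (Om a b) (val b) = 0) ->
  \sum_(j : vtx W) F (ext0 Om t (val j)) (val j) = 0.
Proof.
move=> VW F0 rowF; have [tV|tNV] := boolP (t \in V); last first.
  by apply: big1 => j _; rewrite ext0_outl.
rewrite (sum_vtx_sub (G := fun s => F (ext0 Om t s) s) VW) => [|s sV]; last first.
  by rewrite ext0_outr.
by rewrite -[t]/(val (exist _ t tV : vtx V)); under eq_bigr do rewrite ext0E.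
Qed.

Lemma stress_add V d (E : {set {set T}}) (p : T -> 'rV[R]_d) (Om1 Om2 : vtx V -> vtx V -> R) :
  is_stress E p Om1 -> is_stress E p Om2 ->
  is_stress E p (fun i j => Om1 i j + Om2 i j).
Proof.
move=> [sym1 edge1 row1 rowp1] [sym2 edge2 row2 rowp2]; split.
- by move=> i j; rewrite sym1 sym2.
- by move=> i j ij nE; rewrite edge1 ?edge2 ?addr0.
- by move=> i; rewrite big_split /= row1 row2 addr0.
- by move=> i; under eq_bigr do rewrite scalerDl; rewrite big_split /= rowp1 rowp2 addr0.
Qed.

Lemma stress_ext0_on V W d (E E' : {set {set T}}) (pV p : T -> 'rV[R]_d)
    (Om : vtx V -> vtx V -> R) :
  V \subset W -> E \subset E' -> {in V, p =1 pV} ->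
  is_stress E pV Om -> is_stress E' p (ext0_on W Om).
Proof.
move=> VW EE' ppV [OmC nonedge row0 rowp0]; split.
- by move=> i j; exact: ext0C.
- move=> i j ij nE'; rewrite /ext0_on /ext0.
  case: (insubP (vtx V) (val i)) => [a _ ea|_] //.
  case: (insubP (vtx V) (val j)) => [b _ eb|_] //.
  apply: nonedge; first by rewrite -val_eqE ea eb val_eqE.
  by rewrite ea eb; apply: contra nE'; apply/subsetP.
- by move=> i; apply: (rowsum_ext0 (F := fun w _ => w)).
- move=> i; apply: (rowsum_ext0 (F := fun w s => w *: p s)) => // [s|a].
    by rewrite scale0r.
  by under eq_bigr => b _ do rewrite (ppV _ (valP b)); exact: rowp0.
Qed.

Lemma quad_ext0_on V W (Om : vtx V -> vtx V -> R) (x : vtx W -> R) :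
  V \subset W -> quad (ext0_on W Om) x x = quad Om (restr V x) (restr V x).
Proof.
move=> VW; rewrite /quad.
under eq_bigr do under eq_bigr do rewrite -!(ext0vE x).
rewrite (sum_vtx_sub (G := fun t => \sum_(j : vtx W)
           ext0v x t * ext0 Om t (val j) * ext0v x (val j)) VW) => [|s sV]; last first.
  by apply: big1 => j _; rewrite ext0_outl // mulr0 mul0r.
apply: eq_bigr => a _.
rewrite (sum_vtx_sub (G := fun s => ext0v x (val a) * ext0 Om (val a) s * ext0v x s) VW).
  by apply: eq_bigr => b _; rewrite ext0E.
by move=> s sV; rewrite ext0_outr // mulr0 mul0r.
Qed.

Lemma psd_ext0_on V W (Om : vtx V -> vtx V -> R) :
  V \subset W -> psd Om -> psd (ext0_on W Om).
Proof.
move=> VW Om_psd x; rewrite -[X in _ <= X]/(quad _ x x) quad_ext0_on //.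
exact: Om_psd.
Qed.

Lemma in_ker_ext0_on V W (Om : vtx V -> vtx V -> R) (x : vtx W -> R) :
  V \subset W -> in_ker (ext0_on W Om) x -> in_ker Om (restr V x).
Proof.
move=> VW xker a; have := xker (exist _ (val a) (subsetP VW _ (valP a))).
rewrite /ext0_on /=; under eq_bigr do rewrite -(ext0vE x).
rewrite (sum_vtx_sub (G := fun s => ext0 Om (val a) s * ext0v x s) VW) => [|s sV].
  by move=> e; rewrite -[RHS]e; apply: eq_bigr => b _; rewrite ext0E.
by rewrite ext0_outr // mul0r.
Qed.

End ZeroExtension.

Section Attachment.
Variables (R : realType) (d : nat) (T : finType) (VA VB : {set T}).
Variables (EA EB : {set {set T}}) (pA pB : T -> 'rV[R]_d).
Variables (OmA : vtx VA -> vtx VA -> R) (OmB : vtx VB -> vtx VB -> R).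
Hypothesis pA_gen : general_position VA pA.
Hypothesis common_large : (d.+1 <= #|VA :&: VB|)%N.
Hypothesis pAB : forall i, i \in VA :&: VB -> pA i = pB i.
Hypotheses (OmA_stress : is_stress EA pA OmA) (OmB_stress : is_stress EB pB OmB).
Hypotheses (OmA_psd : psd OmA) (OmB_psd : psd OmB).
Hypotheses (OmA_null : nullity OmA = d.+1) (OmB_null : nullity OmB = d.+1).

Let W := VA :|: VB.
Let p i := if i \in VA then pA i else pB i.
Let Om (i j : vtx W) := ext0_on W OmA i j + ext0_on W OmB i j.

Let f (k : 'I_d.+1) : T := enum_val (widen_ord common_large k).

Let f_common k : f k \in VA :&: VB. Proof. exact: enum_valP. Qed.
Let fA k : f k \in VA. Proof. by have := f_common k; rewrite inE => /andP[]. Qed.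
Let fB k : f k \in VB. Proof. by have := f_common k; rewrite inE => /andP[]. Qed.

Let f_free (q : T -> 'rV[R]_d) :
  (forall k, q (f k) = pA (f k)) -> row_free (\matrix_k lift (q (f k))).
Proof.
move=> qf; have -> : \matrix_k lift (q (f k)) = \matrix_k lift (pA (f k)).
  by apply/row_matrixP => k; rewrite !rowK qf.
apply: pA_gen => // k1 k2 /enum_val_inj /(congr1 val) /= k12.
exact: val_inj.
Qed.

Let pAE t : t \in VA -> p t = pA t. Proof. by rewrite /p => ->. Qed.
Let pBE t : t \in VB -> p t = pB t.
Proof. by rewrite /p; case: ifP => // tA tB; apply: pAB; rewrite inE tA tB. Qed.

Let in_ker_part V E (pV : T -> 'rV[R]_d) (OmV : vtx V -> vtx V -> R) :
  (forall k, f k \in V) -> (forall k, pV (f k) = pA (f k)) ->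
  is_stress E pV OmV -> nullity OmV = d.+1 ->
  forall x, in_ker OmV x -> linfun_of (fun a : vtx V => lift (pV (val a))) x.
Proof.
move=> fV pVf OmV_stress OmV_null.
by apply: in_ker_linfun (stress_in_ker_lift OmV_stress) _; rewrite OmV_null
  (rank_lift_rows fV (f_free pVf)).
Qed.

Lemma attachment_stress : is_stress (EA :|: EB) p Om.
Proof.
apply: stress_add; first by apply: stress_ext0_on (subsetUl _ _) (subsetUl _ _) pAE _.
exact: stress_ext0_on (subsetUr _ _) (subsetUr _ _) pBE _.
Qed.

Lemma attachment_psd : psd Om.
Proof. by apply: psd_add; apply: psd_ext0_on; rewrite ?subsetUl ?subsetUr. Qed.

Lemma attachment_in_ker x :
  in_ker Om x -> linfun_of (fun i : vtx W => lift (p (val i))) x.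
Proof.
have [OmAC _ _ _] := OmA_stress; have [OmBC _ _ _] := OmB_stress.
case/in_ker_psd_add; try by move=> i j; exact: ext0C.
- by apply: psd_ext0_on; rewrite ?subsetUl.
- by apply: psd_ext0_on; rewrite ?subsetUr.
move=> /(in_ker_ext0_on (subsetUl _ _)) kerA /(in_ker_ext0_on (subsetUr _ _)) kerB.
have [cA xA] := in_ker_part fA (fun k => erefl) OmA_stress OmA_null kerA.
have [cB xB] := in_ker_part fB (fun k => esym (pAB (f_common k))) OmB_stress OmB_null kerB.
have cAB : cA = cB.
  apply: (lift_coef_inj (P := fun k => pA (f k)) (f_free (fun k => erefl))) => k.
  have := xA (exist _ (f k) (fA k)); have := xB (exist _ (f k) (fB k)).
  by rewrite /= pAB // => <- <-.
exists cA => i; rewrite -(ext0vE x i).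
have [iA|iNA] := boolP (val i \in VA).
  by rewrite pAE //; exact: (xA (exist _ (val i) iA)).
have iB : val i \in VB by move: (valP i); rewrite in_setU (negbTE iNA).
by rewrite pBE // cAB; exact: (xB (exist _ (val i) iB)).
Qed.

Lemma attachment_nullity : nullity Om = d.+1.
Proof.
rewrite (@nullity_rows_mx _ _ _ _ (fun i : vtx W => lift (p (val i)))).
  apply: (rank_lift_rows (f := f)); first by move=> k; rewrite in_setU fA.
  by apply: f_free => k; rewrite pAE.
move=> x; split; first exact: attachment_in_ker.
exact: stress_in_ker_lift attachment_stress x.
Qed.

End Attachment.

Theorem theorem6 (R : realType) (d : nat) (T : finType)
    (VA VB : {set T}) (EA EB : {set {set T}}) (pA pB : T -> 'rV[R]_d)
    (OmA : vtx VA -> vtx VA -> R) (OmB : vtx VB -> vtx VB -> R) :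
  (1 <= d)%N ->
  general_position VA pA ->
  general_position VB pB ->
  VA :&: VB \proper VA ->
  VA :&: VB \proper VB ->
  (d.+1 <= #|VA :&: VB|)%N ->
  (forall i, i \in VA :&: VB -> pA i = pB i) ->
  is_stress EA pA OmA -> psd OmA -> nullity OmA = d.+1 ->
  is_stress EB pB OmB -> psd OmB -> nullity OmB = d.+1 ->
  let p := fun i => if i \in VA then pA i else pB i in
  let Om := fun i j : vtx (VA :|: VB) =>
              ext0 OmA (val i) (val j) + ext0 OmB (val i) (val j) in
  [/\ @is_stress R d T (VA :|: VB) (EA :|: EB) p Om, psd Om & nullity Om = d.+1].
Proof.
move=> _ gA _ _ _ common pAB sA psA nA sB psB nB p Om; split.
- exact: attachment_stress.
- exact: attachment_psd.
- exact: attachment_nullity gA common pAB sA sB psA psB nA nB.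
Qed.
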